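(* Let $a,b$ be integers and let $G\in\mathscr{G}_{a,b}$ be a tricyclic graph with at least one pendant vertex. Suppose $C_p=vu_1\ldots u_{p-1}v$ is an internal cycle of the base $\widetilde G$ with $N_{\widetilde G}(v)=\{u_1,u_{p-1},w_1,w_2\}$. Then $d_G(v)=4$, $p=3$ and $G\in\mathscr{G}_{7,-1}$. Moreover, $d_G(w_1)=d_G(w_2)=2$, and one of $u_1,u_{p-1}$ has degree $2$ in $G$ while the other has degree $a+b-1=5$ in $G$.
   Context: All graphs are simple and connected; $d_G(v)$ is the degree of $v$, $N_G(v)$ its neighbourhood. A tricyclic graph is a connected graph with $|E_G|=|V_G|+2$. For integers $a,b$, $\mathscr{G}_{a,b}$ is the set of connected graphs $G$ such that for every $v\in V_G$, $\sum_{u\in N_G(v)}d_G(u)=a\,d_G(v)+b-d_G(v)^2$. A pendant vertex is a vertex of degree $1$. The base $\widetilde{G}$ of $G$ is the subgraph obtained from $G$ by repeatedly deleting pendant vertices until none remain. An internal cycle of $\widetilde G$ is a cycle $u_0u_1\ldots u_k$ with $u_0=u_k$, $k\ge 3$, $d_{\widetilde G}(u_0)\ge 3$ and $d_{\widetilde G}(u_i)=2$ for $1\le i\le k-1$. *)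

From mathcomp Require Import all_boot all_order all_algebra.
Set Implicit Arguments. Unset Strict Implicit. Unset Printing Implicit Defensive.
Import GRing.Theory Num.Theory.

Section Graphs.
Variables (T : finType) (e : rel T).

Definition simple_graph := symmetric e /\ irreflexive e.
Definition connected_graph := forall x y : T, connect e x y.

Definition nbhd (v : T) : {set T} := [set u | e v u].
Definition deg (v : T) : nat := #|nbhd v|.

Definition edges : {set {set T}} :=
  [set E : {set T} | [exists u, exists w, (E == [set u; w]) && e u w]].

Definition tricyclic := #|edges| = (#|T| + 2)%N.

Definition pendant (v : T) := deg v = 1%N.

Definition in_Gab (a b : int) :=
  forall v : T, (Posz (\sum_(u in nbhd v) deg u)%N
                = a * Posz (deg v) + b - (Posz (deg v)) ^+ 2)%R.

Definition nbhd_in (S : {set T}) (v : T) : {set T} := [set u in S | e v u].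
Definition deg_in (S : {set T}) (v : T) : nat := #|nbhd_in S v|.

Definition prune (S : {set T}) : {set T} := [set x in S | deg_in S x != 1%N].

(* the base: repeatedly delete pendant vertices; #|T| rounds suffice to reach
   the fixpoint since every non-final round removes at least one vertex *)
Definition base : {set T} := iter #|T| prune [set: T].

(* internal cycle v u_1 ... u_{p-1} v of the base, with us = [:: u_1; ...; u_{p-1}],
   so p = size us + 1 *)
Definition internal_cycle (v : T) (us : seq T) :=
  [/\ (2 <= size us)%N /\ uniq (v :: us),
      path e v us /\ e (last v us) v,
      all (fun x => x \in base) (v :: us),
      (3 <= deg_in base v)%N &
      forall u, u \in us -> deg_in base u = 2%N].

End Graphs.

From mathcomp Require Import all_boot all_order all_algebra.
From mathcomp Require Import zify ring lra.
Import GRing.Theory Num.Theory.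
Set Implicit Arguments. Unset Strict Implicit. Unset Printing Implicit Defensive.

(** Write [f d = a d + b - d^2] for the prescribed neighbour-degree sum of a
    vertex of degree [d] and [k = f 1 = a + b - 1], so that every neighbour of a
    pendant vertex has degree [k].  A non-pendant vertex all of whose neighbours
    but one, [y], are pendant is the centre of a pendant star: it has degree [k]
    and [y] has degree [q = f k - (k - 1)].  Since
    [f q = q + k - 1 - b (b + 1) (k - 1) (k - 2) <= q + k - 1], such a [y] has no
    further non-pendant neighbour.  By induction on the pruning rounds, every
    vertex deleted when forming the base is therefore a pendant vertex attached
    directly to a base vertex, so a base vertex has degree equal to its degree
    in the base or to [k].  The pendant vertex of [G] yields [k >= 3] and
    [b <= -1].  Along the internal cycle all degrees then lie in [{2, k}], that
    of [v] in [{4, k}], and the degree-sum equations at [v] and its cycle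
    neighbours leave finitely many cases: cycles of length at least 4 are
    impossible, and length 3 forces [k = 5], [b = -1], [d v = 4] and the stated
    degrees. *)

Section Pruning.
Variables (T : finType) (e : rel T).

Definition prune_iter (j : nat) : {set T} := iter j (prune e) setT.

Lemma prune_sub (S : {set T}) : prune e S \subset S.
Proof. by apply/subsetP => x; rewrite inE => /andP[]. Qed.

Lemma prune_iter_mono i j : (i <= j)%N -> prune_iter j \subset prune_iter i.
Proof.
move=> /subnK <-; elim: (j - i)%N => [|n IH] //=.
by rewrite ?addSn; apply: subset_trans (prune_sub _) IH.
Qed.

(* A strict round deletes a vertex, so #|T|.+1 consecutive strict rounds are
   impossible. *)
Lemma prune_iter_stable : exists2 j, (j <= #|T|)%N & prune_iter j.+1 = prune_iter j.
Proof.
case: (boolP [exists j : 'I_#|T|.+1, prune_iter j.+1 == prune_iter j]).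
  by case/existsP => j /eqP E; exists j; rewrite -1?ltnS.
rewrite negb_exists => /forallP strict.
suff card_drop j : (j <= #|T|.+1)%N -> (#|prune_iter j| + j <= #|T|)%N.
  by have := card_drop _ (leqnn _); lia.
elim: j => [|j IH] lt_j; first by rewrite addn0 cardsT.
have /negP ne := strict (Ordinal (lt_j : j < #|T|.+1)%N).
have lt_card : (#|prune_iter j.+1| < #|prune_iter j|)%N.
  by apply: proper_card; rewrite properEneq prune_sub; apply/andP; split=> //; apply/negP.
by apply: leq_trans (IH (ltnW lt_j)); rewrite addnS -addSn leq_add2r.
Qed.

Lemma prune_base : prune e (base e) = base e.
Proof.
have [j le_j stable] := prune_iter_stable.
have fix_j i : prune_iter (i + j) = prune_iter j.
  by elim: i => [|i IH] //; rewrite addSn /prune_iter iterS -/(prune_iter _) IH.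
have base_j : base e = prune_iter j by rewrite -(fix_j (#|T| - j)) subnK.
by rewrite base_j; exact: stable.
Qed.

Lemma base_deg_in_neq1 x : x \in base e -> deg_in e (base e) x != 1%N.
Proof. by rewrite -{1}prune_base inE => /andP[]. Qed.

Lemma base_sub_prune_iter j : (j <= #|T|)%N -> base e \subset prune_iter j.
Proof. exact: prune_iter_mono. Qed.

Lemma prune_iter_leave x j : x \notin prune_iter j ->
  exists i, [/\ (i < j)%N, x \in prune_iter i & x \notin prune_iter i.+1].
Proof.
elim: j => [|j IH]; first by rewrite inE.
case: (boolP (x \in prune_iter j)) => [xj xnj1|xnj _]; first by exists j.
by have [i [lt_ij xi xni]] := IH xnj; exists i; split => //; apply: ltnW.
Qed.

Lemma prune_iter_leave_deg_in x i :
  x \in prune_iter i -> x \notin prune_iter i.+1 -> deg_in e (prune_iter i) x = 1%N.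
Proof. by rewrite /prune_iter iterS inE => -> /=; rewrite negbK => /eqP. Qed.

Lemma pendant_notin_prune_iter1 x : pendant e x -> x \notin prune_iter 1.
Proof.
rewrite /pendant /deg => dx; rewrite inE in_setT /= /deg_in negbK.
by rewrite (_ : nbhd_in e setT x = nbhd e x) ?dx //; apply/setP => y; rewrite !inE.
Qed.

Lemma pendant_notin_base x : pendant e x -> x \notin base e.
Proof.
move=> /pendant_notin_prune_iter1; apply: contra; apply/subsetP.
by apply: base_sub_prune_iter; apply/card_gt0P; exists x.
Qed.

End Pruning.

Local Open Scope ring_scope.

Definition gab_sum (a b d : int) : int := a * d + b - d ^+ 2.
(* [gab_k] is the degree of the neighbour of a pendant vertex and [gab_anchor]
   the degree of the vertex a pendant star hangs from. *)
Definition gab_k (a b : int) : int := a + b - 1.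
Definition gab_anchor (a b : int) : int := gab_sum a b (gab_k a b) - (gab_k a b - 1).

Lemma gab_sum_anchor_le (a b : int) :
  gab_sum a b (gab_anchor a b) <= gab_anchor a b + gab_k a b - 1.
Proof.
have -> : gab_sum a b (gab_anchor a b) =
    gab_anchor a b + gab_k a b - 1 - (b * (b + 1)) * ((gab_k a b - 2) * (gab_k a b - 1)).
  by rewrite /gab_anchor /gab_sum /gab_k; ring.
have consec_ge0 (x : int) : 0 <= x * (x + 1) by nia.
rewrite lerBlDr lerDl; apply: mulr_ge0; first exact: consec_ge0.
by rewrite (_ : gab_k a b - 1 = gab_k a b - 2 + 1) ?consec_ge0 //; ring.
Qed.

Lemma gab_sum_values (a b : int) :
  [/\ gab_sum a b 2 = 2 * gab_k a b - 2 - b, gab_sum a b 4 = 4 * gab_k a b - 12 - 3 * b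
    & gab_sum a b (gab_k a b) = gab_k a b - b * (gab_k a b - 1)].
Proof. by split; rewrite /gab_sum /gab_k; ring. Qed.

(* Linearises [b * (k - 1)] for the case analyses below. *)
Lemma neg_mul_cases (b k : int) : 3 <= k -> b <= -1 ->
  (b = -1 /\ b * (k - 1) = 1 - k) \/ (b = -2 /\ b * (k - 1) = 2 - 2 * k) \/
  (b <= -3 /\ b * (k - 1) <= 3 - 3 * k).
Proof.
move=> hk hb; have [->|[->|b_le]] : b = -1 \/ b = -2 \/ b <= -3 by lia.
- by left; split=> //; ring.
- by right; left; split=> //; ring.
right; right; split=> //.
have : (b + 3) * (k - 1) <= 0 by apply: mulr_le0_ge0; lia.
have -> : (b + 3) * (k - 1) = b * (k - 1) + 3 * (k - 1) by ring.
lia.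
Qed.

Lemma triangle_degrees (a b : int) (dv d1 d2 w1 w2 : nat) :
  3 <= gab_k a b -> b <= -1 ->
  Posz dv = 4 \/ Posz dv = gab_k a b -> (4 <= dv)%N -> (1 < w1)%N -> (1 < w2)%N ->
  Posz d1 = 2 \/ Posz d1 = gab_k a b -> Posz d2 = 2 \/ Posz d2 = gab_k a b ->
  Posz (d1 + d2 + (w1 + w2) + (dv - 4)) = gab_sum a b dv ->
  Posz (dv + d2 + (d1 - 2)) = gab_sum a b d1 ->
  Posz (d1 + dv + (d2 - 2)) = gab_sum a b d2 ->
  [/\ dv = 4%N, gab_k a b = 5, b = -1, w1 = 2%N /\ w2 = 2%N
    & d1 = 2%N /\ d2 = 5%N \/ d1 = 5%N /\ d2 = 2%N].
Proof.
move=> hk hb; have [f2 f4 fk] := gab_sum_values a b; have := neg_mul_cases hk hb.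
move: (b * _ : int) fk => X fk; move: (gab_k a b) hk f2 f4 fk => k hk f2 f4 fk hX.
move=> hD hD4 hw1 hw2 hd1 hd2 Sv S1 S2.
case: hD => hD; rewrite hD ?f4 ?fk in Sv;
case: hd1 => h1; rewrite h1 ?f2 ?fk in S1;
case: hd2 => h2; rewrite h2 ?f2 ?fk in S2; split; lia.
Qed.

Lemma long_cycle_absurd (a b : int) (dv d1 d2 d3 c1 c2 c3 w1 w2 : nat) :
  3 <= gab_k a b -> b <= -1 ->
  Posz dv = 4 \/ Posz dv = gab_k a b -> (4 <= dv)%N -> (1 < w1)%N -> (1 < w2)%N ->
  Posz d1 = 2 \/ Posz d1 = gab_k a b -> Posz d2 = 2 \/ Posz d2 = gab_k a b ->
  Posz d3 = 2 \/ Posz d3 = gab_k a b -> Posz c1 = 2 \/ Posz c1 = gab_k a b ->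
  Posz c2 = 2 \/ Posz c2 = gab_k a b -> Posz c3 = 2 \/ Posz c3 = gab_k a b ->
  Posz (d1 + c1 + (w1 + w2) + (dv - 4)) = gab_sum a b dv ->
  Posz (dv + d2 + (d1 - 2)) = gab_sum a b d1 ->
  Posz (d1 + d3 + (d2 - 2)) = gab_sum a b d2 ->
  Posz (dv + c2 + (c1 - 2)) = gab_sum a b c1 ->
  Posz (c1 + c3 + (c2 - 2)) = gab_sum a b c2 -> False.
Proof.
move=> hk hb; have [f2 f4 fk] := gab_sum_values a b; have := neg_mul_cases hk hb.
move: (b * _ : int) fk => X fk; move: (gab_k a b) hk f2 f4 fk => k hk f2 f4 fk hX.
move=> hD hD4 hw1 hw2 hd1 hd2 hd3 hc1 hc2 hc3 Sv S1 S2 R1 R2.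
case: hD => hD; rewrite hD ?f4 ?fk in Sv;
case: hd1 => h1; rewrite h1 ?f2 ?fk in S1;
case: hd2 => h2; rewrite h2 ?f2 ?fk in S2; try lia;
case: hc1 => g1; rewrite g1 ?f2 ?fk in R1;
case: hc2 => g2; rewrite g2 ?f2 ?fk in R2; lia.
Qed.

Local Close Scope ring_scope.

Section GabClass.
Variables (T : finType) (e : rel T) (a b : int).
Hypotheses (e_sym : symmetric e) (HG : in_Gab e a b).
Local Notation k := (gab_k a b).
Local Notation f := (gab_sum a b).
Local Notation P := (prune_iter e).

Lemma deg_gt0 u w : e u w -> 0 < deg e u.
Proof. by move=> uw; apply/card_gt0P; exists w; rewrite inE. Qed.

Lemma deg_in_le S x : deg_in e S x <= deg e x.
Proof. by apply/subset_leq_card/subsetP => y; rewrite !inE => /andP[]. Qed.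

Lemma deg_in1_nbr S x : deg_in e S x = 1 ->
  exists p, [/\ p \in S, e x p & forall u, u \in S -> e x u -> u = p].
Proof.
move=> /eqP /cards1P[p Np]; have inN u : (u \in S) && e x u = (u == p).
  by rewrite -in_set1 -Np inE.
have /andP[pS xp] : (p \in S) && e x p by rewrite inN.
by exists p; split=> // u uS xu; apply/eqP; rewrite -inN uS.
Qed.

Lemma sum_nbhd_deg u : Posz (\sum_(w in nbhd e u) deg e w) = f (deg e u).
Proof. exact: HG. Qed.

Lemma pendant_nbr_deg x y : pendant e x -> e x y -> Posz (deg e y) = k.
Proof.
move=> dx xy; have /eqP /cards1P[z Nx] := dx.
have -> : y = z by apply/set1P; rewrite -Nx inE.
have := sum_nbhd_deg x; rewrite Nx big_set1 dx => ->.
by rewrite /gab_sum /gab_k mulr1 expr1n.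
Qed.

Lemma star_center x y : e x y -> (forall u, e x u -> u != y -> pendant e u) ->
  ~ pendant e x -> Posz (deg e x) = k /\ Posz (deg e y) = gab_anchor a b.
Proof.
move=> xy leaves nx; have yN : y \in nbhd e x by rewrite inE.
have cardN := cardsD1 y (nbhd e x); rewrite yN -/(deg e x) in cardN.
have [u uN] : exists u, u \in nbhd e x :\ y.
  apply/card_gt0P; move: nx (deg_gt0 xy); rewrite /pendant cardN add1n.
  by case: #|_|.
move: uN; rewrite !inE => /andP[uy xu].
have dx : Posz (deg e x) = k by apply: (pendant_nbr_deg (leaves u xu uy)); rewrite e_sym.
split=> //; have := sum_nbhd_deg x.
rewrite (big_setD1 y yN) /= (eq_bigr (fun=> 1%N)); last first.
  by move=> w; rewrite !inE => /andP[wy xw]; apply: leaves.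
rewrite sum1_card /gab_anchor -dx; move: cardN; lia.
Qed.

Lemma anchor_nbr_deg_lt2 r c p : e r c -> e r p -> c != p -> Posz (deg e c) = k ->
  Posz (deg e r) = gab_anchor a b -> deg e p < 2.
Proof.
move=> rc rp cp dc dr; rewrite ltnNge; apply/negP => dp.
have split_sum : \sum_(u in nbhd e r) deg e u =
    deg e r + \sum_(u in nbhd e r) (deg e u).-1.
  rewrite [deg e r]/deg -sum1_card -big_split /=; apply: eq_bigr => u.
  by rewrite inE e_sym => /deg_gt0 du; rewrite add1n prednK.
have two_terms : (deg e c).-1 + (deg e p).-1 <= \sum_(u in nbhd e r) (deg e u).-1.
  rewrite (big_setD1 c) ?inE // (big_setD1 p) ?inE ?rp 1?eq_sym ?cp //=.
  by rewrite addnA leq_addr.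
have := gab_sum_anchor_le a b; rewrite -dr -sum_nbhd_deg split_sum.
have := deg_gt0 (etrans (e_sym c r) rc); move: dc two_terms dp; lia.
Qed.

Lemma star_attached_pendant x y z : e x y -> e y z -> z != x -> 1 < deg e z ->
  (forall u, e x u -> u != y -> pendant e u) -> pendant e x.
Proof.
move=> xy yz zx dz leaves; apply/eqP; apply: contraT => /eqP npx.
have [dx dy] := star_center xy leaves npx.
have xz : x != z by rewrite eq_sym.
by have := anchor_nbr_deg_lt2 (etrans (e_sym y x) xy) yz xz dx dy; rewrite ltnNge dz.
Qed.

Lemma prune_iter1_deg_ge2 x y : x \in P 1 -> e x y -> 1 < deg e x.
Proof.
move=> x1 xy; rewrite ltn_neqAle (deg_gt0 xy) andbT eq_sym.
by apply: contraL x1 => /eqP; apply: pendant_notin_prune_iter1.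
Qed.

Lemma base_deg_ge2 x y : x \in base e -> e x y -> 1 < deg e x.
Proof.
move=> xb; apply: prune_iter1_deg_ge2; apply: (subsetP (base_sub_prune_iter _ _)) xb.
by apply/card_gt0P; exists x.
Qed.

Lemma pruned_nbrs_pendant i t r u : t \in P i -> t \notin P i.+1 -> r \in P i ->
  e t r -> e t u -> u != r -> pendant e u.
Proof.
elim/ltn_ind: i t r u => i IH t r u ti tni ri tr tu ur.
have [r' [_ _ unique_r]] := deg_in1_nbr (prune_iter_leave_deg_in ti tni).
have uni : u \notin P i.
  by apply: contra ur => ui; rewrite (unique_r u ui tu) (unique_r r ri tr).
have [i' [lt_i'i ui' uni']] := prune_iter_leave uni.
have ti' : t \in P i' by apply: (subsetP (prune_iter_mono e (ltnW lt_i'i))).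
have r1 : r \in P 1 by apply: (subsetP (prune_iter_mono e (leq_ltn_trans _ lt_i'i))).
have ut : e u t by rewrite e_sym.
apply: (star_attached_pendant ut tr _ (prune_iter1_deg_ge2 r1 (etrans (e_sym r t) tr))).
  by rewrite eq_sym.
by move=> w uw wt; apply: (IH i' lt_i'i u t w ui' uni' ti' ut uw wt).
Qed.

Lemma base_nbr_pendant r s t : r \in base e -> s \in base e -> e r s -> e r t ->
  t \notin base e -> pendant e t.
Proof.
move=> rb sb rs rt tnb.
have [i [lt_i ti tni]] := prune_iter_leave (tnb : t \notin P #|T|).
have ri : r \in P i by apply: (subsetP (base_sub_prune_iter e (ltnW lt_i))).
have tr : e t r by rewrite e_sym.
have st : s != t by apply: contraNneq tnb => <-.
apply: (star_attached_pendant tr rs st (base_deg_ge2 sb (etrans (e_sym s r) rs))).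
by move=> u tu ur; apply: (pruned_nbrs_pendant ti tni ri tr tu ur).
Qed.

Lemma nbhdI_base r : nbhd e r :&: base e = nbhd_in e (base e) r.
Proof. by apply/setP => u; rewrite !inE andbC. Qed.

Lemma deg_split_base r : deg e r = deg_in e (base e) r + #|nbhd e r :\: base e|.
Proof. by rewrite /deg -(cardsID (base e)) nbhdI_base. Qed.

Lemma sum_nbhd_deg_base r s : r \in base e -> s \in base e -> e r s ->
  \sum_(u in nbhd e r) deg e u =
  \sum_(u in nbhd_in e (base e) r) deg e u + (deg e r - deg_in e (base e) r).
Proof.
move=> rb sb rs; rewrite (big_setID (base e)) /= nbhdI_base [deg e r]deg_split_base addKn.
congr (_ + _); rewrite -sum1_card; apply: eq_bigr => u; rewrite !inE => /andP[ub ru].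
exact: (base_nbr_pendant rb sb rs ru ub).
Qed.

Lemma base_deg_cases r s : r \in base e -> s \in base e -> e r s ->
  deg e r = deg_in e (base e) r \/ Posz (deg e r) = k.
Proof.
move=> rb sb rs; have [out0|/card_gt0P[t]] := posnP #|nbhd e r :\: base e|.
  by left; rewrite deg_split_base out0 addn0.
rewrite !inE => /andP[tb rt]; right.
by apply: (pendant_nbr_deg (base_nbr_pendant rb sb rs rt tb)); rewrite e_sym.
Qed.

Lemma base_vertex_sum r s : r \in base e -> uniq s -> s != [::] ->
  nbhd_in e (base e) r = [set x in s] ->
  [/\ size s <= deg e r, deg e r = size s \/ Posz (deg e r) = k &
      Posz (\sum_(u <- s) deg e u + (deg e r - size s)) = f (deg e r)].
Proof.
move=> rb us; case: s us => // x s' us _ Nr.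
have : x \in nbhd_in e (base e) r by rewrite Nr inE mem_head.
rewrite inE => /andP[xb rx].
have dr_in : deg_in e (base e) r = size (x :: s').
  by rewrite /deg_in Nr cardsE; apply/card_uniqP.
split.
- by rewrite -dr_in deg_in_le.
- by rewrite -dr_in; apply: base_deg_cases rx.
rewrite -sum_nbhd_deg (sum_nbhd_deg_base rb xb rx) dr_in big_uniq // Nr.
by congr (Posz (_ + _)); apply: eq_bigl => u; rewrite inE.
Qed.

Lemma path_leaves_base y s p : y \in base e -> s \in base e -> e y s -> path e y p ->
  last y p \notin base e ->
  exists y' s' z, [/\ y' \in base e, s' \in base e, e y' s', e y' z & z \notin base e].
Proof.
elim: p y s => [|z p IH] y s yb sb ys /=; first by rewrite yb.
case/andP => yz zp lz; have [zb|zb] := boolP (z \in base e); last by exists y, s, z.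
by apply: (IH z y zb yb _ zp lz); rewrite e_sym.
Qed.

Lemma pendant_at_base_bounds y s z : y \in base e -> s \in base e -> e y s -> e y z ->
  z \notin base e -> (3 <= k)%R /\ (b <= -1)%R.
Proof.
move=> yb sb ys yz zb.
have dy : Posz (deg e y) = k.
  by apply: (pendant_nbr_deg (base_nbr_pendant yb sb ys yz zb)); rewrite e_sym.
have n_gt1 : 1 < deg_in e (base e) y.
  rewrite ltn_neqAle eq_sym base_deg_in_neq1 //=.
  by apply/card_gt0P; exists s; rewrite !inE sb ys.
have n_lt : deg_in e (base e) y < deg e y.
  rewrite [deg e y]deg_split_base -addn1 leq_add2l.
  by apply/card_gt0P; exists z; rewrite !inE zb yz.
have sum_ge : 2 * deg_in e (base e) y <= \sum_(u in nbhd_in e (base e) y) deg e u.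
  rewrite mulnC -sum_nat_const; apply: leq_sum => u; rewrite !inE => /andP[ub yu].
  by apply: (base_deg_ge2 ub (_ : e u y)); rewrite e_sym.
have := sum_nbhd_deg y; rewrite (sum_nbhd_deg_base yb sb ys) dy.
have -> : f k = (k - b * (k - 1))%R by rewrite /gab_sum /gab_k; ring.
have [b_ge0|] := lerP 0 b; last by lia.
have : (0 <= b * (k - 1))%R by apply: mulr_ge0 => //; lia.
move: (b * (k - 1))%R => X; lia.
Qed.

Lemma gab_bounds x y s : connected_graph e -> pendant e x -> y \in base e ->
  s \in base e -> e y s -> (3 <= k)%R /\ (b <= -1)%R.
Proof.
move=> conn px yb sb ys; have [p ypath xlast] := connectP (conn y x).
have xnb : last y p \notin base e by rewrite -xlast pendant_notin_base.
have [y' [s' [z [y'b s'b y's' y'z zb]]]] := path_leaves_base yb sb ys ypath xnb.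
exact: pendant_at_base_bounds y'b s'b y's' y'z zb.
Qed.

Lemma base_deg2_sum x0 x1 x2 : x0 \in base e -> x1 \in base e -> x2 \in base e ->
  e x1 x0 -> e x1 x2 -> x0 != x2 -> deg_in e (base e) x1 = 2 ->
  (Posz (deg e x1) = 2%R \/ Posz (deg e x1) = k) /\
  Posz (deg e x0 + deg e x2 + (deg e x1 - 2)) = f (deg e x1).
Proof.
move=> b0 b1 b2 e10 e12 n02 d2.
have N2 : #|[set x in [:: x0; x2]]| = 2 by rewrite cardsE; apply/card_uniqP; rewrite /= inE n02.
have Nx1 : nbhd_in e (base e) x1 = [set x in [:: x0; x2]].
  apply/esym/eqP; rewrite eqEcard N2 -/(deg_in e (base e) x1) d2 andbT.
  by apply/subsetP => u; rewrite !inE => /orP[]/eqP->; rewrite ?b0 ?b2 ?e10 ?e12.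
have uniq02 : uniq [:: x0; x2] by rewrite /= inE n02.
have [_ dcase] := base_vertex_sum b1 uniq02 isT Nx1; rewrite !big_cons big_nil addn0.
by split=> //; case: dcase => [->|]; [left|right].
Qed.

Lemma internal_cycle_rev v us : internal_cycle e v us -> internal_cycle e v (rev us).
Proof.
case=> [[size_us uniq_us] [path_us last_v] base_us deg_v deg_us]; split=> //.
- by rewrite size_rev; move: uniq_us; rewrite /= mem_rev rev_uniq.
- have : cycle e (rev (v :: us)).
    by rewrite rev_cycle (eq_cycle (fun x y => e_sym y x)) /= rcons_path path_us last_v.
  by rewrite rev_cons -(rotr_cycle 1) rotr1_rcons /= rcons_path => /andP[-> ->].
- by rewrite /= all_rev.
by move=> u; rewrite mem_rev; apply: deg_us.
Qed.

Lemma internal_cycle_windows v u1 u2 rest : internal_cycle e v [:: u1, u2 & rest] ->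
  [/\ Posz (deg e u1) = 2%R \/ Posz (deg e u1) = k,
      Posz (deg e v + deg e u2 + (deg e u1 - 2)) = f (deg e u1),
      Posz (deg e u2) = 2%R \/ Posz (deg e u2) = k,
      Posz (deg e u1 + deg e (head v rest) + (deg e u2 - 2)) = f (deg e u2) &
      rest != [::] -> Posz (deg e (head v rest)) = 2%R \/ Posz (deg e (head v rest)) = k].
Proof.
case=> [[_ uniq_us] [path_us last_v] base_us _ deg_us].
move: uniq_us; rewrite /= !inE !negb_or => /and4P[/and3P[vu1 vu2 vrest] /andP[u1u2 u1rest] _ _].
case/and3P: path_us => vu1e u1u2e path_rest.
case/and4P: base_us => vb u1b u2b base_rest.
have [d1 d2] : deg_in e (base e) u1 = 2 /\ deg_in e (base e) u2 = 2.
  by split; apply: deg_us; rewrite !inE eqxx ?orbT.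
have d3 : rest != [::] -> deg_in e (base e) (head v rest) = 2.
  by case: rest {vrest u1rest base_rest path_rest last_v} deg_us => //= u3 r deg_us _;
    apply: deg_us; rewrite !inE eqxx !orbT.
have [u3b u2u3 u1u3] : [/\ head v rest \in base e, e u2 (head v rest) & u1 != head v rest].
  case: rest vrest u1rest base_rest path_rest last_v {deg_us d3} => [|u3 r] /=.
    by move=> _ _ _ _ u2v; rewrite eq_sym.
  by rewrite !inE => _ /norP[-> _] /andP[-> _] /andP[-> _].
have [c1 s1] := base_deg2_sum vb u1b u2b (etrans (e_sym _ _) vu1e) u1u2e vu2 d1.
have [c2 s2] := base_deg2_sum u1b u2b u3b (etrans (e_sym _ _) u1u2e) u2u3 u1u3 d2.
split=> // rest0; have [deg_u3|dk] := base_deg_cases u3b u2b (etrans (e_sym _ _) u2u3).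
  by left; rewrite deg_u3 d3.
by right.
Qed.

Lemma deg4_vertex_sum v h l w1 w2 : v \in base e -> uniq [:: h; l; w1; w2] ->
  nbhd_in e (base e) v = [set h; l; w1; w2] ->
  [/\ Posz (deg e v) = 4%R \/ Posz (deg e v) = k, 4 <= deg e v,
      Posz (deg e h + deg e l + (deg e w1 + deg e w2) + (deg e v - 4)) = f (deg e v),
      1 < deg e w1 & 1 < deg e w2].
Proof.
move=> vb uniq_N Nv.
have Nv' : nbhd_in e (base e) v = [set x in [:: h; l; w1; w2]].
  by rewrite Nv; apply/setP => x; rewrite !inE !orbA.
have inN x : x \in [:: h; l; w1; w2] -> x \in base e /\ e x v.
  by rewrite -[_ \in _]in_set -Nv' inE e_sym => /andP.
have deg_ge2 x : x \in [:: w1; w2] -> 1 < deg e x.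
  move=> xw; have [xb xv] : x \in base e /\ e x v.
    by apply: inN; move: xw; rewrite !inE => /orP[]->; rewrite ?orbT.
  exact: base_deg_ge2 xb xv.
have [le4 dcase sum_v] := base_vertex_sum vb uniq_N isT Nv'.
rewrite !big_cons big_nil addn0 in sum_v.
split; rewrite ?deg_ge2 ?inE ?eqxx ?orbT //; first by case: dcase => [->|]; [left|right].
by rewrite -sum_v /= !addnA.
Qed.

Lemma internal_cycle_size2 v us w1 w2 : (3 <= k)%R -> (b <= -1)%R ->
  internal_cycle e v us -> uniq [:: head v us; last v us; w1; w2] ->
  nbhd_in e (base e) v = [set head v us; last v us; w1; w2] -> size us = 2.
Proof.
move=> hk hb cyc uniq_N Nv.
have vb : v \in base e by case: cyc => _ _ /andP[].
have [dv dv4 sum_v dw1 dw2] := deg4_vertex_sum vb uniq_N Nv.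
have [[size_us _] _ _ _ _] := cyc.
case: us size_us cyc sum_v {uniq_N Nv} => [|u1 [|u2 [|u3 rest]]] // _ cyc sum_v.
have [d1 s1 d2 s2 /(_ isT) d3] := internal_cycle_windows cyc.
case rev_us : (rev _) (internal_cycle_rev cyc) => [|y1 [|y2 rest']] rev_cyc;
  try by move/(congr1 size): rev_us; rewrite size_rev.
have [c1 r1 c2 r2 c3] := internal_cycle_windows rev_cyc.
have rest'0 : rest' != [::].
  by apply/eqP => rest'_nil; move/(congr1 size): rev_us; rewrite size_rev rest'_nil.
have last_y1 : last v [:: u1, u2, u3 & rest] = y1.
  by rewrite -[[:: u1, u2, u3 & rest]]revK rev_us rev_cons last_rcons.
rewrite last_y1 /= in sum_v.
by have := long_cycle_absurd hk hb dv dv4 dw1 dw2 d1 d2 d3 c1 c2 (c3 rest'0) sum_v s1 s2 r1 r2.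
Qed.

End GabClass.

Local Open Scope ring_scope.

Theorem lemma3p2 (T : finType) (e : rel T) (a b : int)
  (Hsimple : simple_graph e) (Hconn : connected_graph e)
  (Htri : tricyclic e) (HG : in_Gab e a b)
  (Hpend : exists x : T, pendant e x)
  (v : T) (us : seq T) (w1 w2 : T)
  (Hcyc : internal_cycle e v us)
  (Hdist : uniq [:: head v us; last v us; w1; w2])
  (HN : nbhd_in e (base e) v = [set head v us; last v us; w1; w2]) :
  [/\ deg e v = 4%N /\ (size us).+1 = 3%N,
      in_Gab e 7 (-1),
      deg e w1 = 2%N /\ deg e w2 = 2%N,
      a + b - 1 = 5 &
      (deg e (head v us) = 2%N /\ deg e (last v us) = 5%N) \/
      (deg e (head v us) = 5%N /\ deg e (last v us) = 2%N)].
Proof.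
case: Hsimple => e_sym _; have [x px] := Hpend.
have vb : v \in base e by case: Hcyc => _ _ /andP[].
have : head v us \in nbhd_in e (base e) v by rewrite HN !inE eqxx.
rewrite inE => /andP[u1b vu1].
have [hk hb] := gab_bounds e_sym HG Hconn px vb u1b vu1.
have size_us := internal_cycle_size2 e_sym HG hk hb Hcyc Hdist HN.
have [dv dv4 sum_v dw1 dw2] := deg4_vertex_sum e_sym HG vb Hdist HN.
case: us size_us Hcyc Hdist HN sum_v {u1b vu1} => [|u1 [|u2 []]] // _ Hcyc _ _ sum_v.
have [d1 s1 d2 s2 _] := internal_cycle_windows e_sym HG Hcyc.
have [-> k5 b_m1 [-> ->] degs] := triangle_degrees hk hb dv dv4 dw1 dw2 d1 d2 sum_v s1 s2.
have a7 : a = 7 by move: k5; rewrite /gab_k b_m1; lia.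
by split=> //; rewrite -a7 -b_m1.
Qed.
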